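(* Let $\mathcal{K}^+$ be the fragment of the positive logic $\mathcal{V}^+$ whose formulas are generated only by the rules: $\{n\}\in VF(\mathbf{N})$; $(V\mapsto\Phi)\in VF(\tau\to\tau')$ for $V\in\mathit{Val}(\tau)$ and $\Phi$ a computation formula of $\mathcal{K}^+$ of type $\tau'$; $o\,\phi$ a computation formula for $o\in\mathcal{O}$ and $\phi$ a value formula of $\mathcal{K}^+$; and closure of value formulas (only) under arbitrary $\bigvee$ and $\bigwedge$ (so computation formulas are exactly the formulas $o\,\phi$). Then the induced logical preorder $\sqsubseteq_{\mathcal{K}^+}$ coincides with $\sqsubseteq_{\mathcal{V}^+}$.
   Context: Language: simply typed call-by-value language with types $\tau ::= \mathbf{1}\mid\mathbf{N}\mid\tau\to\tau'$, values $*, Z, S(V), \lambda x{:}\tau.M, x$, computations $VW$, $\mathbf{return}\,V$, $\mathbf{let}\,M\Rightarrow x\,\mathbf{in}\,N$, $\mathbf{fix}(V)$, case on naturals, and effect operations from a signature $\Sigma$. $\mathit{Val}(\tau)$, $\mathit{Com}(\tau)$: closed values/computations; $\overline{n}=S^n(Z)$. Each $M\in\mathit{Com}(\tau)$ has an operational effect tree $|M|\in T(\mathit{Val}(\tau))$, where $TX$ is the set of possibly infinite trees with leaves $\bot$ or in $X$ and internal nodes labelled by effect operations. A set $\mathcal{O}$ of modalities is given with $[\![o]\!]\subseteq T\mathbf{1}$; $t[\in P]$ replaces leaves in $P$ by $*$ and other value leaves by $\bot$. Logic $\mathcal{V}^+$: value formulas $VF(\tau)$, computation formulas $CF(\tau)$: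 $\{n\}\in VF(\mathbf{N})$; $(V\mapsto\Phi)\in VF(\tau\to\tau')$ for $V\in\mathit{Val}(\tau)$, $\Phi\in CF(\tau')$; $o\phi\in CF(\tau)$; both closed under arbitrary $\bigwedge,\bigvee$ (no negation). $W\models\{n\}$ iff $W=\overline{n}$; $W\models(V\mapsto\Phi)$ iff $WV\models\Phi$; $M\models o\phi$ iff $|M|[\in\{V\mid V\models\phi\}]\in[\![o]\!]$. For a fragment $\mathcal{L}$, $A\sqsubseteq_{\mathcal{L}}B$ (same type and aspect) iff every formula of $\mathcal{L}$ satisfied by $A$ is satisfied by $B$. *)

From Stdlib Require Import List ClassicalEpsilon.
From Stdlib Require Fin.
Import ListNotations.

Inductive ty : Type := One | Nat | Arr (a b : ty).
Definition ctx := list ty.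

Inductive var : ctx -> ty -> Type :=
| Vz {Γ τ} : var (τ :: Γ) τ
| Vs {Γ σ τ} : var Γ τ -> var (σ :: Γ) τ.

(* ---------- Effect signatures ----------
   Each operation has one of the arities  α^n -> α,  α^N -> α,
   N × α^n -> α,  N × α^N -> α  (optionally taking a natural-number
   parameter; finitely many or countably many (N-indexed) branches). *)
Inductive arity : Type := ArF (n : nat) | ArN | ArPF (n : nat) | ArPN.
Definition param (a : arity) : Type :=
  match a with ArF _ | ArN => unit | ArPF _ | ArPN => nat end.
Definition children (a : arity) : Type :=
  match a with ArF n | ArPF n => Fin.t n | ArN | ArPN => nat end.
Definition signature := arity -> Type.

Section Lang.
Variable Σ : signature.

Inductive Val : ctx -> ty -> Type :=
| VVar {Γ τ} : var Γ τ -> Val Γ τ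
| VUnit {Γ} : Val Γ One
| VZ {Γ} : Val Γ Nat
| VS {Γ} : Val Γ Nat -> Val Γ Nat
| VLam {Γ σ ρ} : Com (σ :: Γ) ρ -> Val Γ (Arr σ ρ)
with Com : ctx -> ty -> Type :=
| CApp {Γ σ ρ} : Val Γ (Arr σ ρ) -> Val Γ σ -> Com Γ ρ
| CRet {Γ τ} : Val Γ τ -> Com Γ τ
| CLet {Γ σ τ} : Com Γ σ -> Com (σ :: Γ) τ -> Com Γ τ
| CFix {Γ σ ρ} : Val Γ (Arr (Arr σ ρ) (Arr σ ρ)) -> Com Γ (Arr σ ρ)
| CCase {Γ τ} : Val Γ Nat -> Com Γ τ -> Com (Nat :: Γ) τ -> Com Γ τ
| COpF {Γ τ} (n : nat) : Σ (ArF n) -> (Fin.t n -> Com Γ τ) -> Com Γ τ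
| COpPF {Γ τ} (n : nat) : Σ (ArPF n) -> Val Γ Nat -> (Fin.t n -> Com Γ τ) -> Com Γ τ
| COpN {Γ τ} : Σ ArN -> Com (Nat :: Γ) τ -> Com Γ τ
| COpPN {Γ τ} : Σ ArPN -> Val Γ Nat -> Com (Nat :: Γ) τ -> Com Γ τ.

Definition ren (Γ Δ : ctx) := forall τ, var Γ τ -> var Δ τ.

Definition ren_up {Γ Δ σ} (r : ren Γ Δ) : ren (σ :: Γ) (σ :: Δ) :=
  fun τ x =>
    match x in var G t return
      match G with [] => unit | s :: G' => ren G' Δ -> var (s :: Δ) t end with
    | Vz => fun _ => Vz
    | Vs y => fun r => Vs (r _ y)
    end r.

Fixpoint renV {Γ τ} (v : Val Γ τ) {struct v} : forall Δ, ren Γ Δ -> Val Δ τ :=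
  match v in Val G t return forall Δ, ren G Δ -> Val Δ t with
  | VVar x => fun Δ r => VVar (r _ x)
  | VUnit => fun Δ r => VUnit
  | VZ => fun Δ r => VZ
  | VS w => fun Δ r => VS (renV w Δ r)
  | VLam M => fun Δ r => VLam (renC M _ (ren_up r))
  end
with renC {Γ τ} (m : Com Γ τ) {struct m} : forall Δ, ren Γ Δ -> Com Δ τ :=
  match m in Com G t return forall Δ, ren G Δ -> Com Δ t with
  | CApp V W => fun Δ r => CApp (renV V Δ r) (renV W Δ r)
  | CRet V => fun Δ r => CRet (renV V Δ r)
  | CLet M N => fun Δ r => CLet (renC M Δ r) (renC N _ (ren_up r))
  | CFix V => fun Δ r => CFix (renV V Δ r)
  | CCase V M0 M1 => fun Δ r => CCase (renV V Δ r) (renC M0 Δ r) (renC M1 _ (ren_up r))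
  | COpF n o ks => fun Δ r => COpF n o (fun i => renC (ks i) Δ r)
  | COpPF n o V ks => fun Δ r => COpPF n o (renV V Δ r) (fun i => renC (ks i) Δ r)
  | COpN o K => fun Δ r => COpN o (renC K _ (ren_up r))
  | COpPN o V K => fun Δ r => COpPN o (renV V Δ r) (renC K _ (ren_up r))
  end.

Definition wkV {Γ σ τ} (v : Val Γ τ) : Val (σ :: Γ) τ :=
  renV v (σ :: Γ) (fun _ x => Vs x).

Definition sub (Γ Δ : ctx) := forall τ, var Γ τ -> Val Δ τ.

Definition sub_up {Γ Δ σ} (s : sub Γ Δ) : sub (σ :: Γ) (σ :: Δ) :=
  fun τ x =>
    match x in var G t return
      match G with [] => unit | s0 :: G' => sub G' Δ -> Val (s0 :: Δ) t end with
    | Vz => fun _ => VVar Vz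
    | Vs y => fun s => wkV (s _ y)
    end s.

Fixpoint subV {Γ τ} (v : Val Γ τ) {struct v} : forall Δ, sub Γ Δ -> Val Δ τ :=
  match v in Val G t return forall Δ, sub G Δ -> Val Δ t with
  | VVar x => fun Δ s => s _ x
  | VUnit => fun Δ s => VUnit
  | VZ => fun Δ s => VZ
  | VS w => fun Δ s => VS (subV w Δ s)
  | VLam M => fun Δ s => VLam (subC M _ (sub_up s))
  end
with subC {Γ τ} (m : Com Γ τ) {struct m} : forall Δ, sub Γ Δ -> Com Δ τ :=
  match m in Com G t return forall Δ, sub G Δ -> Com Δ t with
  | CApp V W => fun Δ s => CApp (subV V Δ s) (subV W Δ s)
  | CRet V => fun Δ s => CRet (subV V Δ s)
  | CLet M N => fun Δ s => CLet (subC M Δ s) (subC N _ (sub_up s))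
  | CFix V => fun Δ s => CFix (subV V Δ s)
  | CCase V M0 M1 => fun Δ s => CCase (subV V Δ s) (subC M0 Δ s) (subC M1 _ (sub_up s))
  | COpF n o ks => fun Δ s => COpF n o (fun i => subC (ks i) Δ s)
  | COpPF n o V ks => fun Δ s => COpPF n o (subV V Δ s) (fun i => subC (ks i) Δ s)
  | COpN o K => fun Δ s => COpN o (subC K _ (sub_up s))
  | COpPN o V K => fun Δ s => COpPN o (subV V Δ s) (subC K _ (sub_up s))
  end.

Definition scons {Γ σ} (W : Val Γ σ) : sub (σ :: Γ) Γ :=
  fun τ x =>
    match x in var G t return
      match G with [] => unit | s0 :: G' => Val G' s0 -> Val G' t end with
    | Vz => fun W => W
    | Vs y => fun _ => VVar y
    end W.

Definition subst1 {Γ σ τ} (M : Com (σ :: Γ) τ) (W : Val Γ σ) : Com Γ τ :=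
  subC M Γ (scons W).

Fixpoint numeral {Γ} (n : nat) : Val Γ Nat :=
  match n with 0 => VZ | S m => VS (numeral m) end.

Fixpoint vnat {Γ τ} (v : Val Γ τ) : option nat :=
  match v with
  | VZ => Some 0
  | VS w => option_map S (vnat w)
  | _ => None
  end.

Definition as_lam {Γ σ ρ} (v : Val Γ (Arr σ ρ)) : option (Com (σ :: Γ) ρ) :=
  match v in Val G t return
    match t with Arr a b => option (Com (a :: G) b) | _ => unit end with
  | VLam M => Some M
  | @VVar G t _ =>
      match t as t0 return
        match t0 with Arr a b => option (Com (a :: G) b) | _ => unit end with
      | Arr _ _ => None | One => tt | Nat => tt end
  | VUnit => tt
  | VZ => tt
  | VS _ => tt
  end.

Definition as_nat {Γ} (v : Val Γ Nat) : option (option (Val Γ Nat)) :=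
  match v in Val G t return
    match t with Nat => option (option (Val G Nat)) | _ => unit end with
  | VZ => Some None
  | VS w => Some (Some w)
  | @VVar G t _ =>
      match t as t0 return
        match t0 with Nat => option (option (Val G Nat)) | _ => unit end with
      | Nat => None | One => tt | Arr _ _ => tt end
  | VUnit => tt
  | VLam _ => tt
  end.

(* stacks of pending  let _ => x in N  frames *)
Inductive stack (Γ : ctx) : ty -> ty -> Type :=
| SNil {τ} : stack Γ τ τ
| SCons {σ σ' τ} : Com (σ :: Γ) σ' -> stack Γ σ' τ -> stack Γ σ τ.
Arguments SNil {Γ τ}.
Arguments SCons {Γ σ σ' τ}.

Definition state (Γ : ctx) (τ : ty) : Type := {σ : ty & (Com Γ σ * stack Γ σ τ)%type}.

Inductive outcome (Γ : ctx) (τ : ty) : Type :=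
| ODone (v : Val Γ τ)
| OStep (st : state Γ τ)
| OStuck
| ONode (a : arity) (o : Σ a) (p : param a) (ch : children a -> state Γ τ).
Arguments ODone {Γ τ}.
Arguments OStep {Γ τ}.
Arguments OStuck {Γ τ}.
Arguments ONode {Γ τ}.

Definition mkst {Γ σ τ} (M : Com Γ σ) (Sk : stack Γ σ τ) : state Γ τ :=
  existT _ σ (M, Sk).

Definition step {Γ τ} (st : state Γ τ) : outcome Γ τ :=
  match st with existT _ σ (M, Sk) =>
  (match M in Com G s return stack G s τ -> outcome G τ with
   | CApp V W => fun Sk =>
       match as_lam V with Some B => OStep (mkst (subst1 B W) Sk) | None => OStuck end
   | CRet V => fun Sk =>
       (match Sk in stack _ s' t' return Val _ s' -> outcome _ t' with
        | SNil => fun V => ODone V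
        | SCons K Sk' => fun V => OStep (mkst (subst1 K V) Sk')
        end) V
   | CLet M N => fun Sk => OStep (mkst M (SCons N Sk))
   | @CFix G σ0 ρ0 V => fun Sk =>
       (* fix(V) ~> V (λx. let fix(V) => y in y x) *)
       OStep (mkst (CApp V (VLam (CLet (CFix (@wkV G σ0 _ V))
                                      (CApp (VVar Vz) (VVar (Vs Vz)))))) Sk)
   | CCase V M0 M1 => fun Sk =>
       match as_nat V with
       | Some None => OStep (mkst M0 Sk)
       | Some (Some w) => OStep (mkst (subst1 M1 w) Sk)
       | None => OStuck
       end
   | COpF n o ks => fun Sk =>
       ONode (ArF n) o tt (fun i : Fin.t n => mkst (ks i) Sk)
   | COpPF n o v ks => fun Sk =>
       match vnat v with
       | Some k => ONode (ArPF n) o k (fun i : Fin.t n => mkst (ks i) Sk)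
       | None => OStuck
       end
   | COpN o K => fun Sk =>
       ONode ArN o tt (fun i : nat => mkst (subst1 K (numeral i)) Sk)
   | COpPN o v K => fun Sk =>
       match vnat v with
       | Some k => ONode ArPN o k (fun i : nat => mkst (subst1 K (numeral i)) Sk)
       | None => OStuck
       end
   end) Sk
  end.

Fixpoint run {Γ τ} (n : nat) (st : state Γ τ) : option (outcome Γ τ) :=
  match step st with
  | OStep st' => match n with 0 => None | S m => run m st' end
  | o => Some o
  end.

CoInductive tree (X : Type) : Type :=
| TBot
| TLeaf (x : X)
| TNode (a : arity) (o : Σ a) (p : param a) (ch : children a -> tree X).
Arguments TBot {X}.
Arguments TLeaf {X}.
Arguments TNode {X}.

(* the operational effect tree of a machine state: if the machine reaches
   return V with empty stack after finitely many silent steps -> leaf V;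
   if it reaches an effect operation -> node with the continuations;
   if it runs forever silently -> ⊥ *)
CoFixpoint optree {Γ τ} (st : state Γ τ) : tree (Val Γ τ) :=
  match excluded_middle_informative (exists n, run n st <> None) with
  | left H =>
      match run (proj1_sig (constructive_indefinite_description _ H)) st with
      | Some (ODone v) => TLeaf v
      | Some (ONode a o p ch) => TNode a o p (fun i => optree (ch i))
      | _ => TBot
      end
  | right _ => TBot
  end.

Definition eff_tree {τ} (M : Com [] τ) : tree (Val [] τ) := optree (mkst M SNil).

CoFixpoint tfilter {X} (P : X -> Prop) (t : tree X) : tree unit :=
  match t with
  | TBot => TBot
  | TLeaf x => if excluded_middle_informative (P x) then TLeaf tt else TBot
  | TNode a o p ch => TNode a o p (fun i => tfilter P (ch i))
  end.

End Lang.

Arguments VVar {Σ Γ τ}. Arguments VUnit {Σ Γ}. Arguments VZ {Σ Γ}.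
Arguments VS {Σ Γ}. Arguments VLam {Σ Γ σ ρ}.
Arguments CApp {Σ Γ σ ρ}. Arguments CRet {Σ Γ τ}. Arguments CLet {Σ Γ σ τ}.
Arguments CFix {Σ Γ σ ρ}. Arguments CCase {Σ Γ τ}.
Arguments COpF {Σ Γ τ}. Arguments COpPF {Σ Γ τ}. Arguments COpN {Σ Γ τ}.
Arguments COpPN {Σ Γ τ}.
Arguments TBot {Σ X}. Arguments TLeaf {Σ X}. Arguments TNode {Σ X}.

Section Logic.
Variable Σ : signature.
Variable O : Type.
Variable interp : O -> tree Σ unit -> Prop.

Inductive VF : ty -> Type :=
| FNat (n : nat) : VF Nat
| FMap {σ ρ} (V : Val Σ [] σ) (Φ : CF ρ) : VF (Arr σ ρ)
| FVAnd {τ} (I : Type) (f : I -> VF τ) : VF τ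
| FVOr {τ} (I : Type) (f : I -> VF τ) : VF τ
with CF : ty -> Type :=
| FMod {τ} (o : O) (φ : VF τ) : CF τ
| FCAnd {τ} (I : Type) (f : I -> CF τ) : CF τ
| FCOr {τ} (I : Type) (f : I -> CF τ) : CF τ.

Fixpoint sat_v {τ} (φ : VF τ) {struct φ} : Val Σ [] τ -> Prop :=
  match φ in VF t return Val Σ [] t -> Prop with
  | FNat n => fun W => W = numeral Σ n
  | FMap V Φ => fun W => sat_c Φ (CApp W V)
  | FVAnd J f => fun W => forall i, sat_v (f i) W
  | FVOr J f => fun W => exists i, sat_v (f i) W
  end
with sat_c {τ} (Φ : CF τ) {struct Φ} : Com Σ [] τ -> Prop :=
  match Φ in CF t return Com Σ [] t -> Prop with
  | FMod o φ => fun M => interp o (tfilter Σ (fun v => sat_v φ v) (eff_tree Σ M))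
  | FCAnd J f => fun M => forall i, sat_c (f i) M
  | FCOr J f => fun M => exists i, sat_c (f i) M
  end.

(* A fragment L is given by which value / computation formulas belong to it;
   A ⊑_L B iff every L-formula satisfied by A is satisfied by B. *)
Definition val_le (Lv : forall τ, VF τ -> Prop) {τ} (V W : Val Σ [] τ) : Prop :=
  forall φ : VF τ, Lv τ φ -> sat_v φ V -> sat_v φ W.
Definition com_le (Lc : forall τ, CF τ -> Prop) {τ} (M N : Com Σ [] τ) : Prop :=
  forall Φ : CF τ, Lc τ Φ -> sat_c Φ M -> sat_c Φ N.

Definition allV : forall τ, VF τ -> Prop := fun _ _ => True.
Definition allC : forall τ, CF τ -> Prop := fun _ _ => True.

Fixpoint inKv {τ} (φ : VF τ) {struct φ} : Prop :=
  match φ with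
  | FNat _ => True
  | FMap _ Φ => inKc Φ
  | FVAnd _ f => forall i, inKv (f i)
  | FVOr _ f => forall i, inKv (f i)
  end
with inKc {τ} (Φ : CF τ) {struct Φ} : Prop :=
  match Φ with
  | FMod _ φ => inKv φ
  | FCAnd _ _ => False
  | FCOr _ _ => False
  end.

End Logic.

(* Every value formula of V+ is equivalent to one of K+: conjunctions and
   disjunctions of computation formulas can be pushed out of [V ↦ -], since
   [V ↦ ⋀ Φ_i] and [⋀ (V ↦ Φ_i)] have the same models (likewise for ⋁), and
   whether [o φ] holds depends only on the set of models of [φ].  For
   computations, K+ contains all the [o φ], and any preorder that preserves
   these also preserves their arbitrary conjunctions and disjunctions. *)

From Pilot Require Import Defs.
From Stdlib Require Import List FunctionalExtensionality PropExtensionality.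
Import ListNotations.

Section PositiveLogic.
Variable Σ : signature.
Variable O : Type.
Variable interp : O -> tree Σ unit -> Prop.

Local Notation VF := (VF Σ O).
Local Notation CF := (CF Σ O).
Local Notation sat_v := (sat_v Σ O interp).
Local Notation sat_c := (sat_c Σ O interp).

Scheme VF_mut_ind := Induction for Defs.VF Sort Prop
  with CF_mut_ind := Induction for Defs.CF Sort Prop.
Combined Scheme VF_CF_mut_ind from VF_mut_ind, CF_mut_ind.

Definition equiv_v {τ} (φ ψ : VF τ) : Prop := forall W, sat_v φ W <-> sat_v ψ W.

Lemma sat_mod_equiv {τ} (o : O) (φ ψ : VF τ) (M : Com Σ [] τ) :
  equiv_v φ ψ -> sat_c (FMod Σ O o φ) M <-> sat_c (FMod Σ O o ψ) M.
Proof.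
  intros Hφψ; simpl.
  replace (fun v => sat_v φ v) with (fun v => sat_v ψ v); [tauto |].
  apply functional_extensionality; intros v.
  apply propositional_extensionality; symmetry; apply Hφψ.
Qed.

Lemma val_le_sub (L L' : forall τ, VF τ -> Prop) {τ} (V W : Val Σ [] τ) :
  (forall τ' φ, L' τ' φ -> L τ' φ) ->
  val_le Σ O interp L V W -> val_le Σ O interp L' V W.
Proof. intros HLL' HL φ Hφ; apply HL, HLL', Hφ. Qed.

Lemma com_le_sub (L L' : forall τ, CF τ -> Prop) {τ} (M N : Com Σ [] τ) :
  (forall τ' Φ, L' τ' Φ -> L τ' Φ) ->
  com_le Σ O interp L M N -> com_le Σ O interp L' M N.
Proof. intros HLL' HL Φ HΦ; apply HL, HLL', HΦ. Qed.

Definition val_expressive (L : forall τ, VF τ -> Prop) : Prop :=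
  forall τ (φ : VF τ), exists ψ, L τ ψ /\ equiv_v ψ φ.

Lemma val_le_all_of_expressive (L : forall τ, VF τ -> Prop) {τ} (V W : Val Σ [] τ) :
  val_expressive L -> val_le Σ O interp L V W -> val_le Σ O interp (allV Σ O) V W.
Proof.
  intros Hexp HL φ _ HV.
  destruct (Hexp τ φ) as [ψ [Hψ Hψφ]].
  apply Hψφ, HL, Hψφ; assumption.
Qed.

Lemma com_le_all_of_modal (Lv : forall τ, VF τ -> Prop) (Lc : forall τ, CF τ -> Prop)
    {τ} (M N : Com Σ [] τ) :
  val_expressive Lv -> (forall τ' o (φ : VF τ'), Lv τ' φ -> Lc τ' (FMod Σ O o φ)) ->
  com_le Σ O interp Lc M N -> com_le Σ O interp (allC Σ O) M N.
Proof.
  intros Hexp Hmod HL Φ _; revert M N HL.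
  induction Φ as [τ o φ | τ J f IH | τ J f IH]; intros M N HL; simpl.
  - destruct (Hexp τ φ) as [ψ [Hψ Hψφ]].
    intros HM; apply (sat_mod_equiv o ψ φ N Hψφ), HL, (sat_mod_equiv o ψ φ M Hψφ);
      auto.
  - intros HM i; apply (IH i M); auto.
  - intros [i HM]; exists i; apply (IH i M); auto.
Qed.

(** [to_K φ] is the K+ normal form of [φ]; [map_to_K V Φ] that of [V ↦ Φ]. *)
Fixpoint to_K {τ} (φ : VF τ) {struct φ} : VF τ :=
  match φ in Defs.VF _ _ t return VF t with
  | FNat _ _ n => FNat Σ O n
  | FMap _ _ V Φ => map_to_K V Φ
  | FVAnd _ _ J f => FVAnd Σ O J (fun i => to_K (f i))
  | FVOr _ _ J f => FVOr Σ O J (fun i => to_K (f i))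
  end
with map_to_K {σ ρ} (V : Val Σ [] σ) (Φ : CF ρ) {struct Φ} : VF (Arr σ ρ) :=
  match Φ in Defs.CF _ _ t return VF (Arr σ t) with
  | FMod _ _ o φ => FMap Σ O V (FMod Σ O o (to_K φ))
  | FCAnd _ _ J f => FVAnd Σ O J (fun i => map_to_K V (f i))
  | FCOr _ _ J f => FVOr Σ O J (fun i => map_to_K V (f i))
  end.

Lemma to_K_inK :
  (forall τ (φ : VF τ), inKv Σ O (to_K φ)) /\
  (forall ρ (Φ : CF ρ) σ (V : Val Σ [] σ), inKv Σ O (map_to_K V Φ)).
Proof.
  apply VF_CF_mut_ind; simpl; auto.
Qed.

Lemma to_K_equiv :
  (forall τ (φ : VF τ), equiv_v (to_K φ) φ) /\
  (forall ρ (Φ : CF ρ) σ (V : Val Σ [] σ) W,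
     sat_v (map_to_K V Φ) W <-> sat_c Φ (CApp W V)).
Proof.
  apply VF_CF_mut_ind; unfold equiv_v; simpl.
  - tauto.
  - intros σ ρ V Φ IH W; apply IH.
  - intros τ J f IH W; split; intros HW i; apply IH, HW.
  - intros τ J f IH W; split; intros [i HW]; exists i; apply IH, HW.
  - intros τ o φ IH σ V W; apply (sat_mod_equiv o _ _ _ IH).
  - intros τ J f IH σ V W; split; intros HW i; apply IH, HW.
  - intros τ J f IH σ V W; split; intros [i HW]; exists i; apply IH, HW.
Qed.

Lemma K_val_expressive : val_expressive (@inKv Σ O).
Proof.
  intros τ φ; exists (to_K φ); split; [apply to_K_inK | apply to_K_equiv].
Qed.

End PositiveLogic.

Theorem proposition4p6 (Σ : signature) (O : Type)
  (interp : O -> tree Σ unit -> Prop) (τ : ty) :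
  (forall V W : Val Σ [] τ,
      val_le Σ O interp (@inKv Σ O) V W <-> val_le Σ O interp (allV Σ O) V W) /\
  (forall M N : Com Σ [] τ,
      com_le Σ O interp (@inKc Σ O) M N <-> com_le Σ O interp (allC Σ O) M N).
Proof.
  split; intros A B; split.
  - apply val_le_all_of_expressive, K_val_expressive.
  - apply val_le_sub; exact (fun _ _ _ => I).
  - apply com_le_all_of_modal with (Lv := @inKv Σ O).
    + apply K_val_expressive.
    + exact (fun _ _ _ Hφ => Hφ).
  - apply com_le_sub; exact (fun _ _ _ => I).
Qed.
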